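(* Let $U$ and $V$ be finite-dimensional vector spaces over a field $\mathbb{K}$. Let $\mathcal{T}$ be an additive subgroup of $\mathcal{L}(U,V)$ that contains a linear subspace $\mathcal{S}$ with $\operatorname{codim}_{\mathcal{L}(U,V)}\mathcal{S}\leq\dim V-2$, and let $F:\mathcal{T}\to V$ be a range-compatible group homomorphism. Then $F$ is local: there exists $x\in U$ with $F(t)=t(x)$ for all $t\in\mathcal{T}$.
   Context: A map $F:\mathcal{T}\to V$ on a subset $\mathcal{T}\subset\mathcal{L}(U,V)$ is range-compatible when $F(t)\in\operatorname{im}t$ for all $t\in\mathcal{T}$. *)

From HB Require Import structures.
From mathcomp Require Import all_boot all_order all_algebra.
Set Implicit Arguments. Unset Strict Implicit. Unset Printing Implicit Defensive.
Import GRing.Theory.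
Local Open Scope ring_scope.

Definition range_compatible (K : fieldType) (U V : vectType K)
  (T : {pred 'Hom(U, V)}) (F : 'Hom(U, V) -> V) : Prop :=
  forall t, t \in T -> F t \in limg t.

Definition is_local (K : fieldType) (U V : vectType K)
  (T : {pred 'Hom(U, V)}) (F : 'Hom(U, V) -> V) : Prop :=
  exists x : U, forall t, t \in T -> F t = t x.

From HB Require Import structures.
From mathcomp Require Import all_boot all_order all_algebra.
From mathcomp Require Import zify.
From Stdlib Require Import ClassicalEpsilon.
Set Implicit Arguments. Unset Strict Implicit. Unset Printing Implicit Defensive.
Import GRing.Theory.
Local Open Scope ring_scope.

(* Let (e_j) be the canonical basis of U and write y (x) e_j^* for the
   rank-one map u |-> e_j^*(u) y.  The proof is by strong induction on dim V.
   - If S = L(U, V), then F is additive and range-compatible on the whole of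
     L(U, V).  On each family y |-> y (x) e_j^* it is an additive map sending
     every vector into its own line, hence a homothety of some ratio c_j
     (dim V >= 2), and x = sum_j c_j e_j works (local_on_whole_space).
   - Otherwise there are j and non-collinear y1, y2 with y_i (x) e_j^* not in S
     (two_directions).  For y = y_i, project V along Ky onto a complement W:
     the projected family p o T, with G (p o t) = p (F t), satisfies the
     hypotheses with target W, because projecting kills y (x) e_j^* and so
     lowers the codimension of S by one (codim_img_lt).  By induction there
     is x_i with F t - t x_i in Ky_i for t in T (local_mod_line).  Every t in
     S then maps x2 - x1 into the plane Ky1 + Ky2, which a dimension count
     forbids unless x1 = x2 (eval_in_plane_eq0); finally F t - t x1 lies in
     Ky1 /\ Ky2 = 0. *)

Section Lines.
Variables (K : fieldType) (V : vectType K).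

Lemma line_indep (y y0 : V) (a b : K) :
  y0 != 0 -> y \notin <[y0]>%VS -> a *: y + b *: y0 = 0 -> a = 0 /\ b = 0.
Proof.
move=> y0_neq0 y_off E.
have a0 : a = 0.
  apply/eqP; apply: contraNT y_off => a_neq0; apply/vlineP; exists (- (b / a)).
  have ->: y = a^-1 *: (a *: y) by rewrite scalerA mulVf // scale1r.
  by rewrite -(opprK (a *: y)) (addr0_eq E) scalerN scalerA mulrC scaleNr.
split=> //; move/eqP: E; rewrite a0 scale0r add0r scaler_eq0 (negbTE y0_neq0).
by rewrite orbF => /eqP.
Qed.

Lemma notin_lineD (y w y0 : V) :
  y \in <[y0]>%VS -> w \notin <[y0]>%VS -> y + w \notin <[y0]>%VS.
Proof. by move=> y_in; apply: contra => yw_in; rewrite -(addKr y w) memvD ?memvN. Qed.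

Lemma lines_meet0 (y1 y2 v : V) :
  y1 != 0 -> y2 \notin <[y1]>%VS -> v \in <[y1]>%VS -> v \in <[y2]>%VS -> v = 0.
Proof.
move=> y1_neq0 y2_off /vlineP [a ->] /vlineP [b Eb].
have : b *: y2 + (- a) *: y1 = 0 by rewrite -Eb scaleNr subrr.
by case/(line_indep y1_neq0 y2_off) => _ /eqP; rewrite oppr_eq0 => /eqP ->; rewrite scale0r.
Qed.

Lemma additive_line_preserving_scalar (g : V -> V) :
  {morph g : a b / a + b} -> (forall y, g y \in <[y]>%VS) ->
  (1 < \dim {:V})%N -> exists c : K, forall y, g y = c *: y.
Proof.
move=> gD g_line dimV.
pose y0 := vpick {:V}.
have y0_neq0 : y0 != 0 by rewrite vpick0 -dimv_eq0; apply: contraTneq dimV => ->.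
have /subvPn [w _ w_off] : ~~ (fullv <= <[y0]>)%VS.
  apply: contraTN dimV => /dimvS.
  by rewrite dim_vline y0_neq0 -ltnNge ltnS.
have [c gy0] := vlineP _ _ (g_line y0).
have off_line y : y \notin <[y0]>%VS -> g y = c *: y.
  move=> y_off; have [a gy] := vlineP _ _ (g_line y).
  have [b gyy0] := vlineP _ _ (g_line (y + y0)).
  have : (a - b) *: y + (c - b) *: y0 = 0.
    by rewrite !scalerBl addrACA -opprD -gy -gy0 -gD gyy0 scalerDr subrr.
  by case/(line_indep y0_neq0 y_off) => /subr0_eq ab /subr0_eq cb; rewrite gy ab cb.
exists c => y; have [y_in | /off_line //] := boolP (y \in <[y0]>%VS).
have := off_line _ (notin_lineD y_in w_off).
by rewrite gD (off_line _ w_off) scalerDr => /addIr.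
Qed.

End Lines.

Section RankOne.
Variables (K : fieldType) (U V : vectType K).

Definition rank_one_fun (y : V) (j : 'I_(\dim {:U})) (u : U) : V :=
  coord (vbasis {:U}) j u *: y.

Fact rank_one_fun_linear y j : linear (rank_one_fun y j).
Proof. by move=> a u v; rewrite /rank_one_fun linearP scalerDl scalerA. Qed.

HB.instance Definition _ y j :=
  GRing.isLinear.Build K U V *:%R (rank_one_fun y j) (rank_one_fun_linear y j).

Definition rank_one y j : 'Hom(U, V) := linfun (rank_one_fun y j).

Lemma rank_oneE y j u : rank_one y j u = coord (vbasis {:U}) j u *: y.
Proof. by rewrite lfunE. Qed.

Lemma rank_oneD y1 y2 j : rank_one (y1 + y2) j = rank_one y1 j + rank_one y2 j.
Proof. by apply/lfunP => u; rewrite add_lfunE !rank_oneE scalerDr. Qed.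

Lemma rank_one0 j : rank_one 0 j = 0.
Proof. by apply/lfunP => u; rewrite rank_oneE scaler0 zero_lfunE. Qed.

Lemma limg_rank_one y j : (limg (rank_one y j) <= <[y]>)%VS.
Proof.
by apply/subvP => _ /memv_imgP [u _ ->]; rewrite rank_oneE memvZ ?memv_line.
Qed.

Lemma rank_one_decomp (t : 'Hom(U, V)) :
  t = \sum_(j < \dim {:U}) rank_one (t (vbasis {:U})`_j) j.
Proof.
apply/lfunP => u; rewrite sum_lfunE {1}(coord_vbasis (memvf u)) linear_sum.
by apply: eq_bigr => j _; rewrite rank_oneE linearZ.
Qed.

(* Base case S = L(U, V): an additive range-compatible map on the whole of
   L(U, V) is local when dim V >= 2.  On each family y |-> y (x) e_j^* it is
   a homothety of ratio c_j, and x = sum_j c_j e_j then works. *)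
Lemma local_on_whole_space (F : 'Hom(U, V) -> V) :
  {morph F : s t / s + t} -> (forall t, F t \in limg t) ->
  (1 < \dim {:V})%N -> exists x, forall t, F t = t x.
Proof.
move=> FD F_rc dimV.
have F0 : F 0 = 0 by apply: (addIr (F 0)); rewrite add0r -FD addr0.
have ratio j : exists c : K, forall y, F (rank_one y j) = c *: y.
  apply: additive_line_preserving_scalar dimV => [y1 y2 | y].
    by rewrite rank_oneD FD.
  exact: subvP (limg_rank_one y j) _ (F_rc _).
have [c Fc] := fin_all_exists ratio.
exists (\sum_j c j *: (vbasis {:U})`_j) => t.
rewrite {1}(rank_one_decomp t) (big_morph F FD F0) linear_sum.
by apply: eq_bigr => j _; rewrite Fc linearZ.
Qed.

End RankOne.

Section Codimension.
Variables (K : fieldType) (X Y : vectType K) (f : 'Hom(X, Y)).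
Hypothesis f_onto : limg f = fullv.

Lemma codim_img_le (S : {vspace X}) :
  (\dim {:Y} + \dim S <= \dim {:X} + \dim (f @: S))%N.
Proof.
have dim_ker := limg_ker_dim f fullv; rewrite capfv f_onto in dim_ker.
have dim_S := limg_ker_dim f S; have := dimvS (capvSr S (lker f)); lia.
Qed.

Lemma codim_img_lt (S : {vspace X}) (k : X) : k \in lker f -> k \notin S ->
  (\dim {:Y} + \dim S < \dim {:X} + \dim (f @: S))%N.
Proof.
move=> k_ker k_notS.
have dim_ker := limg_ker_dim f fullv; rewrite capfv f_onto in dim_ker.
have dim_S := limg_ker_dim f S.
have : (\dim (S :&: lker f) < \dim (lker f))%N.
  rewrite (ltn_leqif (dimv_leqif_eq (capvSr _ _))).
  by apply: contra k_notS => /eqP capE; move: k_ker; rewrite -capE memv_cap => /andP [].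
lia.
Qed.

End Codimension.

(* The codimension hypothesis of the theorem, without truncated subtraction. *)
Lemma codim_leqE (K : fieldType) (X : vectType K) (S : {vspace X}) (k d : nat) :
  (\dim {:X} - \dim S + k <= d)%N = (\dim {:X} + k <= d + \dim S)%N.
Proof. by have := dimvS (subvf S); lia. Qed.

Section Evaluation.
Variables (K : fieldType) (U V : vectType K).

Definition eval_at (z : U) (t : 'Hom(U, V)) : V := t z.

Fact eval_at_linear z : linear (eval_at z).
Proof. by move=> a s t; rewrite /eval_at add_lfunE scale_lfunE. Qed.

HB.instance Definition _ z :=
  GRing.isLinear.Build K 'Hom(U, V) V *:%R (eval_at z) (eval_at_linear z).

Definition evaluation z : 'Hom('Hom(U, V), V) := linfun (eval_at z).

Lemma evaluationE z t : evaluation z t = t z.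
Proof. by rewrite lfunE. Qed.

(* Evaluation at a nonzero vector z is onto: for any j with e_j^*(z) != 0,
   w is the value at z of the rank-one map e_j^*(z)^-1 w (x) e_j^*. *)
Lemma limg_evaluation z : z != 0 -> limg (evaluation z) = fullv.
Proof.
move=> z_neq0; have [j cz_neq0] : exists j, coord (vbasis {:U}) j z != 0.
  apply/existsP; apply: contraNT z_neq0; rewrite negb_exists => /forallP cz0.
  rewrite (coord_vbasis (memvf z)) big1 // => j _.
  by move/negPn/eqP: (cz0 j) ->; rewrite scale0r.
apply/eqP; rewrite eqEsubv subvf; apply/subvP => w _; apply/memv_imgP.
exists ((coord (vbasis {:U}) j z)^-1 *: rank_one w j); first exact: memvf.
by rewrite evaluationE scale_lfunE rank_oneE scalerA mulVf // scale1r.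
Qed.

(* If a subspace S of codimension <= dim V - 2, enlarged by one more map t1,
   sends z into a plane P, then z = 0: evaluation at a nonzero z is onto V,
   so it cannot squeeze a space of codimension <= dim V - 3 into a plane. *)
Lemma eval_in_plane_eq0 (S : {vspace 'Hom(U, V)}) (t1 : 'Hom(U, V))
    (P : {vspace V}) (z : U) :
  (\dim {:'Hom(U, V)} + 2 <= \dim {:V} + \dim S)%N -> (\dim P <= 2)%N ->
  t1 \notin S -> t1 z \in P -> (forall t, t \in S -> t z \in P) -> z = 0.
Proof.
move=> codimS dimP t1_notS t1z_in S_P; apply/eqP/negPn/negP => z_neq0.
pose S1 := (S + <[t1]>)%VS.
have dimS1 : (\dim S < \dim S1)%N.
  rewrite (ltn_leqif (dimv_leqif_eq (addvSl _ _))); apply: contra t1_notS => /eqP ->.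
  exact: subvP (addvSr _ _) _ (memv_line _).
have img_S1 : (evaluation z @: S1 <= P)%VS.
  apply/subvP => _ /memv_imgP [_ /memv_addP [s sS [_ /vlineP [k ->] ->]] ->].
  by rewrite linearD linearZ /= !lfunE memvD ?memvZ // S_P.
have := codim_img_le (limg_evaluation z_neq0) S1.
have := dimvS img_S1; have := dimvS (subvf S).
(* Naming the dimensions lets lia identify them up to conversion. *)
set m := \dim {:V} in codimS *; set N := \dim {:'Hom(U, V)} in codimS *.
set s := \dim S in codimS dimS1 *; set s1 := \dim S1 in dimS1 *; lia.
Qed.

End Evaluation.

Section LineComplement.
Variables (K : fieldType) (V : vectType K) (y : V).
Hypothesis y_neq0 : y != 0.

(* A complement W of the line Ky, and the projection V -> W along Ky, which
   realizes the quotient V / Ky. *)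
Definition line_compl : {vspace V} := (<[y]>^C)%VS.

Definition proj_along_line : 'Hom(V, subvs_of line_compl) :=
  (linfun (vsproj line_compl) \o daddv_pi line_compl <[y]>)%VF.

Lemma proj_along_lineE v :
  proj_along_line v = vsproj line_compl (daddv_pi line_compl <[y]> v).
Proof. by rewrite comp_lfunE lfunE. Qed.

Lemma line_compl_cap : (line_compl :&: <[y]> = 0)%VS.
Proof. by rewrite capvC capv_compl. Qed.

Lemma proj_along_line_eq0 v : (proj_along_line v == 0) = (v \in <[y]>%VS).
Proof.
have v_sum : v \in (line_compl + <[y]>)%VS by rewrite addvC addv_complf memvf.
have v_split := daddv_pi_add line_compl_cap v_sum.
rewrite proj_along_lineE -(inj_eq (@subvs_inj _ _ line_compl)) vsprojK ?memv_pi //.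
rewrite linear0; apply/eqP/idP => [pi0 | v_line].
  by rewrite -v_split pi0 add0r memv_pi.
by move/eqP: v_split; rewrite (daddv_pi_id (capv_compl _) v_line) -subr_eq0 addrK => /eqP.
Qed.

Lemma proj_along_line_id (w : subvs_of line_compl) : proj_along_line (vsval w) = w.
Proof. by rewrite proj_along_lineE daddv_pi_id ?subvsP ?line_compl_cap // vsvalK. Qed.

Lemma dim_line_compl : \dim {:V} = (\dim {:subvs_of line_compl}).+1.
Proof.
have dimV_gt0 : (0 < \dim {:V})%N.
  by rewrite lt0n dimv_eq0; apply: contra y_neq0 => /eqP V0; rewrite -memv0 -V0 memvf.
have -> : \dim {:subvs_of line_compl} = \dim line_compl by rewrite dimvf.
by rewrite dimv_compl dim_vline y_neq0 subn1 prednK.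
Qed.

End LineComplement.

Section PostComposition.
Variables (K : fieldType) (U V W : vectType K) (p : 'Hom(V, W)).

Definition postcomp_fun (t : 'Hom(U, V)) : 'Hom(U, W) := (p \o t)%VF.

Fact postcomp_fun_linear : linear postcomp_fun.
Proof. by move=> a s t; rewrite /postcomp_fun comp_lfunDr comp_lfunZr. Qed.

HB.instance Definition _ :=
  GRing.isLinear.Build K 'Hom(U, V) 'Hom(U, W) *:%R postcomp_fun postcomp_fun_linear.

Definition postcomp : 'Hom('Hom(U, V), 'Hom(U, W)) := linfun postcomp_fun.

Lemma postcompE t : postcomp t = (p \o t)%VF.
Proof. by rewrite lfunE. Qed.

Lemma limg_postcomp (q : 'Hom(W, V)) : (forall w, p (q w) = w) -> limg postcomp = fullv.
Proof.
move=> pqK; apply/eqP; rewrite eqEsubv subvf; apply/subvP => s _.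
apply/memv_imgP; exists (q \o s)%VF; first exact: memvf.
by rewrite postcompE comp_lfunA; apply/lfunP => u; rewrite !comp_lfunE pqK.
Qed.

End PostComposition.

Definition locality (K : fieldType) (U V : vectType K) : Prop :=
  forall (T : {pred 'Hom(U, V)})
  (T0 : 0 \in T) (TB : forall s t, s \in T -> t \in T -> s - t \in T)
  (S : {vspace 'Hom(U, V)}) (ST : forall s, s \in S -> s \in T)
  (codimS : (\dim {:'Hom(U, V)} - \dim S + 2 <= \dim {:V})%N)
  (F : 'Hom(U, V) -> V)
  (Fadd : forall s t, s \in T -> t \in T -> F (s + t) = F s + F t)
  (Frc : range_compatible T F), is_local T F.

Definition image_pred (A B : Type) (f : A -> B) (P : {pred A}) : {pred B} :=
  fun b => if excluded_middle_informative (exists2 a, a \in P & b = f a)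
           then true else false.

Lemma image_predP (A B : Type) (f : A -> B) (P : {pred A}) b :
  reflect (exists2 a, a \in P & b = f a) (b \in image_pred f P).
Proof. by rewrite unfold_in /image_pred; case: excluded_middle_informative; constructor. Qed.

Section InductiveStep.
Variables (K : fieldType) (U V : vectType K) (y : V).
Hypothesis y_neq0 : y != 0.
Variables (T : {pred 'Hom(U, V)}) (S : {vspace 'Hom(U, V)}) (F : 'Hom(U, V) -> V).
Hypotheses (T0 : 0 \in T) (TB : forall s t, s \in T -> t \in T -> s - t \in T).
Hypothesis ST : forall s, s \in S -> s \in T.
Hypothesis codimS : (\dim {:'Hom(U, V)} + 2 <= \dim {:V} + \dim S)%N.
Hypothesis Fadd : forall s t, s \in T -> t \in T -> F (s + t) = F s + F t.
Hypothesis Frc : range_compatible T F.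
Variable j : 'I_(\dim {:U}).
Hypothesis y_notS : rank_one y j \notin S.

Local Notation W := (subvs_of (line_compl y)).
Local Notation p := (proj_along_line y).

(* The projected data: T' = p o T, S' = p o S, and G (p o t) = p (F t). *)
Let T' : {pred 'Hom(U, W)} := image_pred (postcomp_fun p) T.
Let S' : {vspace 'Hom(U, W)} := (postcomp U p @: S)%VS.
Let G (s : 'Hom(U, W)) : W :=
  p (F (epsilon (inhabits 0) (fun t => t \in T /\ s = (p \o t)%VF))).

Lemma T_add s t : s \in T -> t \in T -> s + t \in T.
Proof. by move=> sT tT; rewrite -[t]opprK -[- t]add0r TB ?TB. Qed.

Lemma F_sub s t : s \in T -> t \in T -> F (s - t) = F s - F t.
Proof. by move=> sT tT; apply/eqP; rewrite eq_sym subr_eq -Fadd ?TB ?subrK. Qed.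

Lemma T'_postcomp t : t \in T -> (p \o t)%VF \in T'.
Proof. by move=> tT; apply/image_predP; exists t. Qed.

(* G is well defined: two maps of T with the same projection differ by a map
   with range in Ky, which F sends into Ky by range-compatibility. *)
Lemma G_postcomp t : t \in T -> G (p \o t)%VF = p (F t).
Proof.
move=> tT; rewrite /G.
have [] := epsilon_spec (inhabits 0)
  (fun u => u \in T /\ (p \o t)%VF = (p \o u)%VF) (ex_intro _ t (conj tT erefl)).
set u := epsilon _ _ => uT ptu.
have /memv_imgP [w _ Fw] := Frc (TB tT uT).
have : p (F (t - u)) = 0.
  by rewrite Fw -comp_lfunE comp_lfunDr comp_lfunNr ptu subrr zero_lfunE.
by rewrite F_sub // linearB => /subr0_eq.
Qed.

Lemma T'0 : 0 \in T'.
Proof. by have := T'_postcomp T0; rewrite comp_lfun0r. Qed.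

Lemma T'B s t : s \in T' -> t \in T' -> s - t \in T'.
Proof.
move=> /image_predP [s0 s0T ->] /image_predP [t0 t0T ->].
by rewrite /postcomp_fun -comp_lfunNr -comp_lfunDr T'_postcomp ?TB.
Qed.

Lemma S'T' s : s \in S' -> s \in T'.
Proof. by case/memv_imgP => t tS ->; rewrite postcompE T'_postcomp ?ST. Qed.

Lemma G_add s t : s \in T' -> t \in T' -> G (s + t) = G s + G t.
Proof.
move=> /image_predP [s0 s0T ->] /image_predP [t0 t0T ->].
by rewrite /postcomp_fun -comp_lfunDr !G_postcomp ?T_add // Fadd // linearD.
Qed.

Lemma G_range_compatible : range_compatible T' G.
Proof.
move=> _ /image_predP [t tT ->]; rewrite G_postcomp //.
have /memv_imgP [u _ ->] := Frc tT.
by rewrite -comp_lfunE memv_img ?memvf.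
Qed.

(* Projecting along Ky kills y (x) e_j^*, which is not in S: the codimension
   drops by one, exactly as much as the dimension of the target. *)
Lemma codim_S' : (\dim {:'Hom(U, W)} - \dim S' + 2 <= \dim {:W})%N.
Proof.
have p_onto : limg (postcomp U p) = fullv.
  apply: (limg_postcomp U (q := linfun vsval)) => w.
  by rewrite [linfun vsval w]lfunE proj_along_line_id.
have y_ker : rank_one y j \in lker (postcomp U p).
  rewrite memv_ker postcompE; apply/eqP/lfunP => u.
  rewrite comp_lfunE rank_oneE linearZ zero_lfunE; apply/eqP.
  by rewrite scaler_eq0 proj_along_line_eq0 memv_line orbT.
have := codim_img_lt p_onto y_ker y_notS; have := dim_line_compl y_neq0.
rewrite codim_leqE /S'; move: codimS.
(* Naming the dimensions lets lia identify them up to conversion. *)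
set hV := \dim {:'Hom(U, V)}; set hW := \dim {:'Hom(U, W)}; set dV := \dim {:V}.
set dW := \dim {:W}; set dS := \dim S; set dS' := \dim (postcomp U p @: S); lia.
Qed.

Lemma local_mod_line : locality U W ->
  exists x, forall t, t \in T -> F t - t x \in <[y]>%VS.
Proof.
move=> IH; have [x Gx] := IH T' T'0 T'B S' S'T' codim_S' G G_add G_range_compatible.
exists x => t tT; rewrite -proj_along_line_eq0 linearB /= -comp_lfunE.
by rewrite -G_postcomp // Gx ?T'_postcomp ?subrr.
Qed.

End InductiveStep.

Lemma two_directions (K : fieldType) (U V : vectType K) (S : {vspace 'Hom(U, V)}) :
  S != fullv -> (1 < \dim {:V})%N ->
  exists j y1 y2, [/\ y1 != 0, y2 \notin <[y1]>%VS,
                      rank_one y1 j \notin S & rank_one y2 j \notin S].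
Proof.
move=> S_neq dimV; have /subvPn [t _ t_notS] : ~~ (fullv <= S)%VS.
  by apply: contra S_neq => fullS; rewrite eqEsubv fullS subvf.
have /existsP [j y1_notS] : [exists j : 'I_(\dim {:U}), rank_one (t (vbasis {:U})`_j) j \notin S].
  rewrite -negb_forall; apply: contra t_notS => /forallP tjS.
  by rewrite [t]rank_one_decomp memv_suml.
set y1 := t _ in y1_notS; exists j, y1.
have y1_neq0 : y1 != 0 by apply: contraNneq y1_notS => ->; rewrite rank_one0 mem0v.
have /subvPn [b _ b_off] : ~~ (fullv <= <[y1]>)%VS.
  by apply: contraTN dimV => /dimvS; rewrite dim_vline y1_neq0 -ltnNge ltnS.
have [bS | b_notS] := boolP (rank_one b j \in S); last by exists b.
exists (y1 + b); split=> //; first exact: notin_lineD (memv_line _) b_off.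
by apply: contra y1_notS => y1bS; rewrite -(addrK (rank_one b j) (rank_one y1 j)) -rank_oneD memvB.
Qed.

Lemma local_of_two_lines (K : fieldType) (U V : vectType K) (T : {pred 'Hom(U, V)})
    (S : {vspace 'Hom(U, V)}) (F : 'Hom(U, V) -> V) j (y1 y2 : V) (x1 x2 : U) :
  (forall s, s \in S -> s \in T) ->
  (\dim {:'Hom(U, V)} + 2 <= \dim {:V} + \dim S)%N ->
  y1 != 0 -> y2 \notin <[y1]>%VS -> rank_one y1 j \notin S ->
  (forall t, t \in T -> F t - t x1 \in <[y1]>%VS) ->
  (forall t, t \in T -> F t - t x2 \in <[y2]>%VS) ->
  forall t, t \in T -> F t = t x1.
Proof.
move=> ST codimS y1_neq0 y2_off y1_notS Hx1 Hx2.
have x21 : x2 - x1 = 0.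
  apply: (eval_in_plane_eq0 (P := <[y1]> + <[y2]>) codimS _ y1_notS).
  - apply: leq_trans (dimv_add_leqif _ _) _; rewrite !dim_vline.
    exact: leq_add (leq_b1 _) (leq_b1 _).
  - by rewrite rank_oneE (subvP (addvSl _ _)) ?memvZ ?memv_line.
  move=> t /ST tT.
  have -> : t (x2 - x1) = (F t - t x1) - (F t - t x2).
    by rewrite linearB opprB [RHS]addrC addrA subrK.
  by apply: memv_add; rewrite ?memvN; [apply: Hx1 | apply: Hx2].
move=> t tT; apply/eqP; rewrite -subr_eq0; apply/eqP.
by apply: (lines_meet0 y1_neq0 y2_off (Hx1 t tT)); rewrite -(subr0_eq x21) Hx2.
Qed.

Lemma locality_by_dim (K : fieldType) (U : vectType K) n (V : vectType K) :
  \dim {:V} = n -> locality U V.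
Proof.
elim/ltn_ind: n V => n IH V dimV T T0 TB S ST codimS F Fadd Frc.
rewrite codim_leqE in codimS.
have [S_full | S_neq] := eqVneq S fullv.
  have allT t : t \in T by rewrite ST // S_full memvf.
  have [|x Fx] := local_on_whole_space (fun s t => Fadd _ _ (allT s) (allT t))
                    (fun t => Frc t (allT t)).
    by move: codimS; rewrite S_full; lia.
  by exists x.
have dim_lt : (\dim S < \dim {:'Hom(U, V)})%N.
  by rewrite (ltn_leqif (dimv_leqif_eq (subvf S))).
have [|j [y1 [y2 [y1_neq0 y2_off y1_notS y2_notS]]]] := two_directions S_neq.
  by move: codimS dim_lt; set N := \dim {:'Hom(U, V)}; lia.
have y2_neq0 : y2 != 0 by apply: contraNneq y2_off => ->; rewrite mem0v.
have IHy (y : V) (y_neq0 : y != 0) : locality U (subvs_of (line_compl y)).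
  by apply: (IH _ _ _ erefl); rewrite -dimV (dim_line_compl y_neq0).
have [x1 Hx1] := local_mod_line y1_neq0 T0 TB ST codimS Fadd Frc y1_notS (IHy _ y1_neq0).
have [x2 Hx2] := local_mod_line y2_neq0 T0 TB ST codimS Fadd Frc y2_notS (IHy _ y2_neq0).
by exists x1; apply: (local_of_two_lines ST codimS y1_neq0 y2_off y1_notS Hx1 Hx2).
Qed.

Unset Implicit Arguments.

Theorem theorem2p8 (K : fieldType) (U V : vectType K)
  (T : {pred 'Hom(U, V)})
  (T0 : 0 \in T) (TB : forall s t, s \in T -> t \in T -> s - t \in T)
  (S : {vspace 'Hom(U, V)}) (ST : forall s, s \in S -> s \in T)
  (codimS : (\dim {:'Hom(U, V)} - \dim S + 2 <= \dim {:V})%N)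
  (F : 'Hom(U, V) -> V)
  (Fadd : forall s t, s \in T -> t \in T -> F (s + t) = F s + F t)
  (Frc : range_compatible T F) :
  is_local T F.
Proof. exact: (locality_by_dim erefl T0 TB ST codimS Fadd Frc). Qed.
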